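(* Let $f$ be an axis rule defined for profiles over every finite candidate set, satisfying resistance to cloning, and suppose there are constants $h^*_m,h_m>0$ ($m\ge3$) such that for every finite $C$ with $|C|=m$, $f$ restricted to profiles over $C$ is the scoring rule with $\mathrm{cost}(A,\triangleleft)=0$ if $A$ is an interval of $\triangleleft$, $\mathrm{cost}(A,\triangleleft)=h^*_m$ if $A$ is not an interval of $\triangleleft$ and contains both the leftmost and rightmost candidate of $\triangleleft$, and $\mathrm{cost}(A,\triangleleft)=h_m$ otherwise. Then $h^*_m\le h_m$ for all $m\ge4$.
   Context: Candidates come from a fixed infinite universe. An approval ballot is a nonempty subset $A\subseteq C$; a profile over $C$ is a finite sequence of ballots. An axis is a strict linear order $\triangleleft$ on $C$. A ballot $A$ is an interval of $\triangleleft$ if for all $a,b\in A$ and every $c$ with $a\triangleleft c\triangleleft b$ we have $c\in A$. The scoring rule with cost $\mathrm{cost}$ returns $\arg\min_{\triangleleft}\sum_{A\in P}\mathrm{cost}(A,\triangleleft)$. Two candidates $a,a'$ are clones in $P$ if for every $A\in P$, $a\in A$ iff $a'\in A$. $P_{-c}$ is the profile over $C\setminus\{c\}$ obtained by removing $c$ from every ballot (ballots becoming empty are discarded); $\triangleleft_{-c}$ is the restriction of $\triangleleft$ to $C\setminus\{c\}$. Resistance to cloning: for every profile $P$ with clones $a,a'$, (1) for every $\triangleleft\in f(P)$, $\triangleleft_{-a}\in f(P_{-a})$, and (2) for every $\triangleleft^*\in f(P_{-a})$ there is $\triangleleft\in f(P)$ with $\triangleleft_{-a}=\triangleleft^*$.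 *)

From HB Require Import structures.
From mathcomp Require Import all_boot all_order all_algebra.
From mathcomp Require Import finmap.
Set Implicit Arguments. Unset Strict Implicit. Unset Printing Implicit Defensive.
Import Order.TTheory GRing.Theory Num.Theory.
Local Open Scope fset_scope.
Local Open Scope ring_scope.

Section Axes.
Variable U : choiceType.

Definition is_profile (C : {fset U}) (P : seq {fset U}) : Prop :=
  forall A, A \in P -> (A != fset0) && (A `<=` C).

(* An axis on C (a strict linear order on C) is represented by the
   duplicate-free sequence listing C from left to right. *)
Definition is_axis (C : {fset U}) (ax : seq U) : Prop :=
  uniq ax /\ (forall x, (x \in ax) = (x \in C)).

Definition axlt (ax : seq U) (a b : U) : bool := (index a ax < index b ax)%N.

Definition is_interval (A : {fset U}) (ax : seq U) : bool :=
  [forall a : A, forall b : A, all (fun c => (axlt ax (val a) c && axlt ax c (val b)) ==> (c \in A)) ax].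

Definition has_both_ends (A : {fset U}) (ax : seq U) : bool :=
  if ax is x :: s then (x \in A) && (last x s \in A) else false.

Definition ax_remove (ax : seq U) (c : U) : seq U := filter (predC1 c) ax.

Definition prof_remove (P : seq {fset U}) (c : U) : seq {fset U} :=
  filter (fun A => A != fset0) (map (fun A => A `\ c) P).

Definition clones (P : seq {fset U}) (a a' : U) : Prop :=
  forall A, A \in P -> (a \in A) = (a' \in A).

(* An axis rule: for each finite candidate set C and profile P over C,
   the set f C P of axes on C it outputs. *)
Definition axis_rule (f : {fset U} -> seq {fset U} -> seq U -> Prop) : Prop :=
  forall C P ax, is_profile C P -> f C P ax -> is_axis C ax.

Definition resistant_to_cloning (f : {fset U} -> seq {fset U} -> seq U -> Prop) : Prop :=
  forall (C : {fset U}) (P : seq {fset U}) (a a' : U),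
    is_profile C P -> a \in C -> a' \in C -> a != a' -> clones P a a' ->
    (forall ax, f C P ax -> f (C `\ a) (prof_remove P a) (ax_remove ax a)) /\
    (forall axs, f (C `\ a) (prof_remove P a) axs ->
       exists2 ax, f C P ax & ax_remove ax a = axs).

Variable R : realFieldType.

Definition cost3 (hstar h : R) (A : {fset U}) (ax : seq U) : R :=
  if is_interval A ax then 0
  else if has_both_ends A ax then hstar else h.

Definition total_cost (hstar h : R) (P : seq {fset U}) (ax : seq U) : R :=
  \sum_(A <- P) cost3 hstar h A ax.

Definition scoring_rule (hstar h : R) (C : {fset U}) (P : seq {fset U}) (ax : seq U) : Prop :=
  is_axis C ax /\
  forall ax', is_axis C ax' -> total_cost hstar h P ax <= total_cost hstar h P ax'.

End Axes.

(* Let Ws be a nonempty list of m - 3 candidates and x, y, z three further ones.  On the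
   m candidates {x, y, z} u Ws take the profile {x,y}, {x,z}, {y,z} u Ws: there the axis
   x y z Ws costs h_m while y Ws z x costs h*_m.  Add a clone a of some w in Ws to the third
   ballot.  Since the middle one of x, y, z on any axis breaks one of the three ballots,
   every axis of the enlarged profile costs at least min(h*_{m+1}, h_{m+1}); the axes
   y Ws a z x and a y Ws z x attain h*_{m+1} and h_{m+1} respectively, so some optimal axis
   restricts to y Ws z x.  Resistance to cloning makes y Ws z x optimal for the original
   profile, whence h*_m <= h_m. *)

From HB Require Import structures.
From mathcomp Require Import all_boot all_order all_algebra.
From mathcomp Require Import finmap.
From mathcomp Require Import ring lra.
Set Implicit Arguments. Unset Strict Implicit. Unset Printing Implicit Defensive.
Import Order.TTheory GRing.Theory Num.Theory.
Local Open Scope fset_scope.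
Local Open Scope ring_scope.

Section Intervals.
Variable U : choiceType.
Implicit Types (A : {fset U}) (ax l s r : seq U).

Lemma axlt_cat l r u v : uniq (l ++ r) -> u \in l -> v \in r -> axlt (l ++ r) u v.
Proof.
rewrite cat_uniq /axlt => /and3P[_ /hasPn lr _] ul vr.
have /negbTE vl : v \notin l by exact: lr.
by rewrite !index_cat ul vl (leq_trans _ (leq_addr _ _)) // index_mem.
Qed.

Lemma axlt_asym ax u v : axlt ax u v -> ~~ axlt ax v u.
Proof. by rewrite /axlt -leqNgt => /ltnW. Qed.

Lemma not_interval_between A ax u v c :
  u \in A -> v \in A -> c \notin A -> c \in ax -> axlt ax u c -> axlt ax c v ->
  ~~ is_interval A ax.
Proof.
move=> uA vA cA cax uc cv; apply/negP.
move=> /forallP/(_ [` uA]) /forallP/(_ [` vA]) /allP/(_ c cax) /=.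
by rewrite uc cv (negbTE cA).
Qed.

Lemma not_interval_gap A l s t r u c v :
  uniq (l ++ u :: s ++ c :: t ++ v :: r) -> u \in A -> v \in A -> c \notin A ->
  ~~ is_interval A (l ++ u :: s ++ c :: t ++ v :: r).
Proof.
move=> uq uA vA cA; apply: (not_interval_between uA vA cA).
- by rewrite !(mem_cat, inE) eqxx !orbT.
- have E : l ++ u :: s ++ c :: t ++ v :: r = (l ++ u :: s) ++ c :: t ++ v :: r.
    by rewrite -catA.
  by rewrite E; apply: axlt_cat; rewrite -?E // !(mem_cat, inE) eqxx ?orbT.
- have E : l ++ u :: s ++ c :: t ++ v :: r = (l ++ u :: s ++ c :: t) ++ v :: r.
    by rewrite -catA /= -catA.
  by rewrite E; apply: axlt_cat; rewrite -?E // !(mem_cat, inE) eqxx ?orbT.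
Qed.

Lemma is_interval_cat A l s r :
  uniq (l ++ s ++ r) -> A =i s -> is_interval A (l ++ s ++ r).
Proof.
move=> uq As; apply/forallP => u; apply/forallP => v; apply/allP => c.
have us : val u \in s by rewrite -As (valP u).
have vs : val v \in s by rewrite -As (valP v).
rewrite As !mem_cat => /or3P[cl|->|cr]; rewrite ?implybT //; apply/implyP => /andP[uc cv].
- have : axlt (l ++ s ++ r) c (val u) by apply: axlt_cat; rewrite // mem_cat us.
  by move/axlt_asym; rewrite uc.
- have E : l ++ s ++ r = (l ++ s) ++ r by rewrite catA.
  have : axlt (l ++ s ++ r) (val v) c.
    by rewrite E; apply: axlt_cat; rewrite -?E // mem_cat vs orbT.
  by move/axlt_asym; rewrite cv.
Qed.

End Intervals.

Lemma middle_of_three (i j k : nat) : i != j -> i != k -> j != k ->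
  [|| (i < k < j)%N || (j < k < i)%N, (i < j < k)%N || (k < j < i)%N
    | (j < i < k)%N || (k < i < j)%N].
Proof. by case: (ltngtP i j); case: (ltngtP i k); case: (ltngtP j k). Qed.

Section Costs.
Variables (U : choiceType) (R : realFieldType) (hs h : R).
Implicit Types (A : {fset U}) (ax : seq U).

Lemma cost3_interval A ax : is_interval A ax -> cost3 hs h A ax = 0.
Proof. by rewrite /cost3 => ->. Qed.

Lemma cost3_both_ends A ax :
  ~~ is_interval A ax -> has_both_ends A ax -> cost3 hs h A ax = hs.
Proof. by rewrite /cost3 => /negbTE -> ->. Qed.

Lemma cost3_one_end A ax :
  ~~ is_interval A ax -> ~~ has_both_ends A ax -> cost3 hs h A ax = h.
Proof. by rewrite /cost3 => /negbTE -> /negbTE ->. Qed.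

Hypotheses (hs_ge0 : 0 <= hs) (h_ge0 : 0 <= h).

Lemma cost3_ge0 A ax : 0 <= cost3 hs h A ax.
Proof. by rewrite /cost3; case: ifP => // _; case: ifP. Qed.

Lemma min_le_cost3 A ax : ~~ is_interval A ax -> Num.min hs h <= cost3 hs h A ax.
Proof. by rewrite /cost3 => /negbTE ->; case: ifP; rewrite ?ge_min lexx ?orbT. Qed.

Lemma triangle_not_interval A1 A2 A3 ax x y z :
  x \in ax -> y \in ax -> z \in ax -> x != y -> x != z -> y != z ->
  x \in A1 -> y \in A1 -> z \notin A1 -> x \in A2 -> z \in A2 -> y \notin A2 ->
  y \in A3 -> z \in A3 -> x \notin A3 ->
  [|| ~~ is_interval A1 ax, ~~ is_interval A2 ax | ~~ is_interval A3 ax].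
Proof.
move=> xax yax zax xy xz yz x1 y1 z1 x2 z2 y2 y3 z3 x3.
have neq_index u v : u \in ax -> v \in ax -> u != v -> index u ax != index v ax.
  by move=> uax vax; apply: contra => /eqP/(index_inj x uax vax) ->.
case/or3P: (middle_of_three (neq_index _ _ xax yax xy) (neq_index _ _ xax zax xz)
                            (neq_index _ _ yax zax yz)) => /orP[]/andP[lt1 lt2].
- by rewrite (not_interval_between x1 y1 z1 zax lt1 lt2).
- by rewrite (not_interval_between y1 x1 z1 zax lt1 lt2).
- by rewrite (not_interval_between x2 z2 y2 yax lt1 lt2) orbT.
- by rewrite (not_interval_between z2 x2 y2 yax lt1 lt2) orbT.
- by rewrite (not_interval_between y3 z3 x3 xax lt1 lt2) !orbT.
- by rewrite (not_interval_between z3 y3 x3 xax lt1 lt2) !orbT.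
Qed.

Lemma total_cost3_ge_min A1 A2 A3 ax :
  [|| ~~ is_interval A1 ax, ~~ is_interval A2 ax | ~~ is_interval A3 ax] ->
  Num.min hs h <= total_cost hs h [:: A1; A2; A3] ax.
Proof.
rewrite /total_cost !big_cons big_nil addr0.
have := cost3_ge0 A1 ax; have := cost3_ge0 A2 ax; have := cost3_ge0 A3 ax.
by move=> ? ? ? /or3P[] /min_le_cost3; lra.
Qed.

End Costs.

Lemma perm_is_axis (U : choiceType) (C : {fset U}) (s t : seq U) :
  is_axis C s -> perm_eq s t -> is_axis C t.
Proof. by move=> [us sC] st; split=> [|u]; rewrite -?(perm_uniq st) -?(perm_mem st). Qed.

Lemma is_axis_fset (U : choiceType) (s : seq U) : uniq s -> is_axis [fset u in s] s.
Proof. by split=> // u; rewrite inE. Qed.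

Lemma is_axis_fsetU1 (U : choiceType) (C : {fset U}) (s : seq U) c :
  is_axis C s -> c \notin C -> is_axis (c |` C) (c :: s).
Proof. by move=> [us sC] cC; split=> [|u]; rewrite /= ?inE sC // cC. Qed.

Section CloneGadget.
Variables (U : choiceType) (R : realFieldType) (a x y z w : U) (Ws : seq U).
Hypotheses (neq_yx : y != x) (neq_zx : z != x) (neq_zy : z != y).
Hypotheses (neq_ax : a != x) (neq_ay : a != y) (neq_az : a != z).
Hypotheses (aWs : a \notin Ws) (xWs : x \notin Ws) (yWs : y \notin Ws) (zWs : z \notin Ws).
Hypotheses (uniq_Ws : uniq Ws) (wWs : w \in Ws).

Let eqF := (negbTE neq_yx, negbTE neq_zx, negbTE neq_zy,
  negbTE neq_ax, negbTE neq_ay, negbTE neq_az,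
  etrans (eq_sym x y) (negbTE neq_yx), etrans (eq_sym x z) (negbTE neq_zx),
  etrans (eq_sym y z) (negbTE neq_zy), etrans (eq_sym x a) (negbTE neq_ax),
  etrans (eq_sym y a) (negbTE neq_ay), etrans (eq_sym z a) (negbTE neq_az),
  negbTE aWs, negbTE xWs, negbTE yWs, negbTE zWs).

Definition ax_xyzW := [:: x, y, z & Ws].
Definition ax_yWzx := y :: Ws ++ [:: z; x].
Definition ax_yWazx := y :: Ws ++ [:: a; z; x].
Definition ax_ayWzx := a :: ax_yWzx.

Definition small_cands : {fset U} := [fset u in ax_xyzW].
Definition big_cands : {fset U} := a |` small_cands.

Definition ballot_xy : {fset U} := [fset x; y].
Definition ballot_xz : {fset U} := [fset x; z].
Definition ballot_yzW : {fset U} := [fset u in [:: y, z & Ws]].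
Definition small_profile := [:: ballot_xy; ballot_xz; ballot_yzW].
Definition big_profile := [:: ballot_xy; ballot_xz; a |` ballot_yzW].

Lemma in_fset_Ws u : (u \in [fset v in Ws]) = (u \in Ws).
Proof. exact: in_fset. Qed.

Let memE := (in_fset_Ws, inE).

Lemma uniq_ax_xyzW : uniq ax_xyzW.
Proof. by rewrite /= !inE !eqF uniq_Ws. Qed.

Lemma card_small_cands : #|` small_cands| = (size Ws).+3.
Proof. by rewrite card_fseq undup_id ?uniq_ax_xyzW. Qed.

Lemma a_notin_small_cands : a \notin small_cands.
Proof. by rewrite !memE !eqF. Qed.

Lemma card_big_cands : #|` big_cands| = #|` small_cands|.+1.
Proof. by rewrite cardfsU1 a_notin_small_cands. Qed.

Lemma big_cands_remove : big_cands `\ a = small_cands.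
Proof. exact: fsetU1K a_notin_small_cands. Qed.

Lemma prof_remove_big_profile : prof_remove big_profile a = small_profile.
Proof.
have a_xy : a \notin ballot_xy by rewrite !memE !eqF.
have a_xz : a \notin ballot_xz by rewrite !memE !eqF.
have a_yzW : a \notin ballot_yzW by rewrite !memE !eqF.
rewrite /prof_remove /= (mem_fsetD1 a_xy) (mem_fsetD1 a_xz) (fsetU1K a_yzW).
have [-> -> -> //] : [/\ ballot_xy != fset0, ballot_xz != fset0 & ballot_yzW != fset0].
by split; apply/fset0Pn; [exists x | exists x | exists y]; rewrite !memE eqxx.
Qed.

Let eqwF := (negbTE (memPn aWs w wWs), negbTE (memPn xWs w wWs),
  negbTE (memPn yWs w wWs), negbTE (memPn zWs w wWs)).

Lemma clones_big_profile : clones big_profile a w.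
Proof.
move=> A; rewrite !memE => /or3P[]/eqP->;
by rewrite !memE !eqF ?eqwF ?eqxx ?wWs ?orbT.
Qed.

Lemma is_profile_small_profile : is_profile small_cands small_profile.
Proof.
move=> A; rewrite !memE => /or3P[]/eqP->; apply/andP; split.
- by apply/fset0Pn; exists x; rewrite !memE eqxx.
- by apply/fsubsetP => u; rewrite !memE => /orP[]->; rewrite ?orbT.
- by apply/fset0Pn; exists x; rewrite !memE eqxx.
- by apply/fsubsetP => u; rewrite !memE => /orP[]->; rewrite ?orbT.
- by apply/fset0Pn; exists y; rewrite !memE eqxx.
- by apply/fsubsetP => u; rewrite !memE => /or3P[]->; rewrite ?orbT.
Qed.

Lemma is_profile_big_profile : is_profile big_cands big_profile.
Proof.
move=> A; rewrite !memE => /or3P[]/eqP->; apply/andP; split.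
- by apply/fset0Pn; exists x; rewrite !memE eqxx.
- by apply/fsubsetP => u; rewrite !memE => /orP[]->; rewrite ?orbT.
- by apply/fset0Pn; exists x; rewrite !memE eqxx.
- by apply/fsubsetP => u; rewrite !memE => /orP[]->; rewrite ?orbT.
- by apply/fset0Pn; exists a; rewrite !memE eqxx.
- by apply/fsubsetP => u; rewrite !memE => /or4P[]->; rewrite ?orbT.
Qed.

Lemma perm_ax_yWzx : perm_eq ax_xyzW ax_yWzx.
Proof. by apply/permP => p; rewrite /= count_cat /=; ring. Qed.

Lemma perm_ax_yWazx : perm_eq (a :: ax_xyzW) ax_yWazx.
Proof. by apply/permP => p; rewrite /= count_cat /=; ring. Qed.

Lemma is_axis_small_cands : is_axis small_cands ax_xyzW.
Proof. exact/is_axis_fset/uniq_ax_xyzW. Qed.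

Lemma is_axis_big_cands : is_axis big_cands (a :: ax_xyzW).
Proof. exact: is_axis_fsetU1 is_axis_small_cands a_notin_small_cands. Qed.

Lemma is_axis_ax_yWzx : is_axis small_cands ax_yWzx.
Proof. exact: perm_is_axis is_axis_small_cands perm_ax_yWzx. Qed.

Lemma is_axis_ax_yWazx : is_axis big_cands ax_yWazx.
Proof. exact: perm_is_axis is_axis_big_cands perm_ax_yWazx. Qed.

Lemma is_axis_ax_ayWzx : is_axis big_cands ax_ayWzx.
Proof. by apply: perm_is_axis is_axis_big_cands _; rewrite perm_cons perm_ax_yWzx. Qed.

Lemma last_in_Ws d : last d Ws \in Ws.
Proof. by case: Ws wWs => //= u s _; exact: mem_last. Qed.

Lemma ax_remove_ax_yWzx : ax_remove ax_yWzx a = ax_yWzx.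
Proof.
have a_Ws : all (predC1 a) Ws by apply/allP => u uWs; apply: contraNneq aWs => <-.
by apply/all_filterP; rewrite /= all_cat a_Ws /= !eqF.
Qed.

Lemma ax_remove_ax_yWazx : ax_remove ax_yWazx a = ax_yWzx.
Proof.
by rewrite -[RHS]ax_remove_ax_yWzx /ax_remove /= !filter_cat /= eqxx.
Qed.

Lemma ax_remove_ax_ayWzx : ax_remove ax_ayWzx a = ax_yWzx.
Proof. by rewrite -[RHS]ax_remove_ax_yWzx /ax_remove /= eqxx. Qed.

Lemma total_cost_ax_xyzW (hs h : R) : total_cost hs h small_profile ax_xyzW = h.
Proof.
have uq := uniq_ax_xyzW.
have i_xy : is_interval ballot_xy ax_xyzW.
  by apply: (@is_interval_cat _ _ [::] [:: x; y] (z :: Ws)) => // u; rewrite !memE.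
have n_xz : ~~ is_interval ballot_xz ax_xyzW.
  by apply: (@not_interval_gap _ _ [::] [::] [::] Ws x y z); rewrite // !memE ?eqxx ?eqF ?orbT.
have e_xz : ~~ has_both_ends ballot_xz ax_xyzW.
  have lastW := last_in_Ws z.
  rewrite /has_both_ends /= !memE (negbTE (memPn xWs _ lastW)).
  by rewrite (negbTE (memPn zWs _ lastW)) andbF.
have i_yzW : is_interval ballot_yzW ax_xyzW.
  have -> : ax_xyzW = [:: x] ++ [:: y, z & Ws] ++ [::] by rewrite cats0.
  by apply: is_interval_cat => [|u]; rewrite ?cats0 // !memE.
rewrite /total_cost !big_cons big_nil (cost3_interval _ _ i_xy) (cost3_one_end _ _ n_xz e_xz).
by rewrite (cost3_interval _ _ i_yzW) !(add0r, addr0).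
Qed.

Lemma total_cost_ax_yWzx (hs h : R) : total_cost hs h small_profile ax_yWzx = hs.
Proof.
have [uq _] := is_axis_ax_yWzx.
have n_xy : ~~ is_interval ballot_xy ax_yWzx.
  by apply: (@not_interval_gap _ _ [::] Ws [::] [::] y z x); rewrite // !memE ?eqxx ?eqF ?orbT.
have b_xy : has_both_ends ballot_xy ax_yWzx.
  by rewrite /has_both_ends /= last_cat /= !memE !eqxx orbT.
have i_xz : is_interval ballot_xz ax_yWzx.
  have -> : ax_yWzx = (y :: Ws) ++ [:: z; x] ++ [::] by [].
  by apply: is_interval_cat => // u; rewrite !memE orbC.
have i_yzW : is_interval ballot_yzW ax_yWzx.
  have -> : ax_yWzx = [::] ++ (y :: Ws ++ [:: z]) ++ [:: x] by rewrite /= -catA.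
  apply: is_interval_cat => [|u]; first by rewrite /= -catA.
  by rewrite !memE mem_cat !inE; case: (u == y) (u == z) (u \in Ws) => [] [] [].
rewrite /total_cost !big_cons big_nil (cost3_both_ends _ _ n_xy b_xy).
by rewrite (cost3_interval _ _ i_xz) (cost3_interval _ _ i_yzW) !addr0.
Qed.

Lemma total_cost_ax_yWazx (hs h : R) : total_cost hs h big_profile ax_yWazx = hs.
Proof.
have [uq _] := is_axis_ax_yWazx.
have n_xy : ~~ is_interval ballot_xy ax_yWazx.
  by apply: (@not_interval_gap _ _ [::] Ws [:: z] [::] y a x); rewrite // !memE ?eqxx ?eqF ?orbT.
have b_xy : has_both_ends ballot_xy ax_yWazx.
  by rewrite /has_both_ends /= last_cat /= !memE !eqxx orbT.
have i_xz : is_interval ballot_xz ax_yWazx.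
  have -> : ax_yWazx = (y :: Ws ++ [:: a]) ++ [:: z; x] ++ [::] by rewrite /= -catA.
  apply: is_interval_cat => [|u]; first by rewrite /= -catA.
  by rewrite !memE orbC.
have i_ayzW : is_interval (a |` ballot_yzW) ax_yWazx.
  have -> : ax_yWazx = [::] ++ (y :: Ws ++ [:: a; z]) ++ [:: x] by rewrite /= -catA.
  apply: is_interval_cat => [|u]; first by rewrite /= -catA.
  rewrite !memE mem_cat !inE.
  by case: (u == a) (u == y) (u == z) (u \in Ws) => [] [] [] [].
rewrite /total_cost !big_cons big_nil (cost3_both_ends _ _ n_xy b_xy).
by rewrite (cost3_interval _ _ i_xz) (cost3_interval _ _ i_ayzW) !addr0.
Qed.

Lemma total_cost_ax_ayWzx (hs h : R) : total_cost hs h big_profile ax_ayWzx = h.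
Proof.
have [uq _] := is_axis_ax_ayWzx.
have n_xy : ~~ is_interval ballot_xy ax_ayWzx.
  by apply: (@not_interval_gap _ _ [:: a] Ws [::] [::] y z x); rewrite // !memE ?eqxx ?eqF ?orbT.
have e_xy : ~~ has_both_ends ballot_xy ax_ayWzx by rewrite /has_both_ends /= !memE !eqF.
have i_xz : is_interval ballot_xz ax_ayWzx.
  have -> : ax_ayWzx = [:: a, y & Ws] ++ [:: z; x] ++ [::] by [].
  by apply: is_interval_cat => // u; rewrite !memE orbC.
have i_ayzW : is_interval (a |` ballot_yzW) ax_ayWzx.
  have -> : ax_ayWzx = [::] ++ (a :: y :: Ws ++ [:: z]) ++ [:: x] by rewrite /= -catA.
  apply: is_interval_cat => [|u]; first by rewrite /= -catA.
  rewrite !memE mem_cat !inE.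
  by case: (u == a) (u == y) (u == z) (u \in Ws) => [] [] [] [].
rewrite /total_cost !big_cons big_nil (cost3_one_end _ _ n_xy e_xy).
by rewrite (cost3_interval _ _ i_xz) (cost3_interval _ _ i_ayzW) !addr0.
Qed.

Lemma big_profile_cost_ge (hs h : R) ax : 0 <= hs -> 0 <= h ->
  is_axis big_cands ax -> Num.min hs h <= total_cost hs h big_profile ax.
Proof.
move=> hs0 h0 [_ axC]; apply: total_cost3_ge_min => //.
by apply: (triangle_not_interval (x := x) (y := y) (z := z));
  rewrite ?axC ?memE ?eqxx ?eqF ?orbT.
Qed.

Lemma exists_optimal_big_axis (hs h : R) : 0 <= hs -> 0 <= h ->
  exists2 ax, scoring_rule hs h big_cands big_profile ax & ax_remove ax a = ax_yWzx.
Proof.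
move=> hs0 h0; have [hs_h | h_hs] := leP hs h.
- exists ax_yWazx; last exact: ax_remove_ax_yWazx.
  split=> [|ax' /(big_profile_cost_ge hs0 h0)]; first exact: is_axis_ax_yWazx.
  by rewrite total_cost_ax_yWazx min_l.
- exists ax_ayWzx; last exact: ax_remove_ax_ayWzx.
  split=> [|ax' /(big_profile_cost_ge hs0 h0)]; first exact: is_axis_ax_ayWzx.
  by rewrite total_cost_ax_ayWzx min_r // ltW.
Qed.

Lemma cloning_forces_hstar_le_h f (hs h hs' h' : R) :
  resistant_to_cloning f -> 0 <= hs' -> 0 <= h' ->
  (forall ax, f small_cands small_profile ax ->
     scoring_rule hs h small_cands small_profile ax) ->
  (forall ax, scoring_rule hs' h' big_cands big_profile ax ->
     f big_cands big_profile ax) ->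
  hs <= h.
Proof.
move=> clon hs0 h0 f_small f_big.
have [ax opt_ax remove_ax] := exists_optimal_big_axis hs0 h0.
have a_big : a \in big_cands by rewrite !memE eqxx.
have w_big : w \in big_cands by rewrite !memE wWs !orbT.
have neq_aw : a != w by apply: contraNneq aWs => ->.
have [restrict _] := clon _ _ _ _ is_profile_big_profile a_big w_big neq_aw clones_big_profile.
have := restrict _ (f_big _ opt_ax).
rewrite big_cands_remove prof_remove_big_profile remove_ax => /f_small[_ opt].
by have := opt _ is_axis_small_cands; rewrite total_cost_ax_yWzx total_cost_ax_xyzW.
Qed.

End CloneGadget.

Lemma exists_fset_card (U : choiceType) :
  (forall S : {fset U}, exists x : U, x \notin S) -> forall n, exists S : {fset U}, #|` S| = n.
Proof.
move=> fresh; elim=> [|n [S cardS]]; first by exists fset0; rewrite cardfs0.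
by have [x xS] := fresh S; exists (x |` S); rewrite cardfsU1 xS cardS.
Qed.

Theorem mainTheorem16 (U : choiceType) (R : realFieldType)
  (f : {fset U} -> seq {fset U} -> seq U -> Prop)
  (hstar h : nat -> R) :
  (forall S : {fset U}, exists x : U, x \notin S) ->
  axis_rule f ->
  resistant_to_cloning f ->
  (forall m : nat, (3 <= m)%N -> 0 < hstar m /\ 0 < h m) ->
  (forall (m : nat) (C : {fset U}) (P : seq {fset U}), (3 <= m)%N -> #|` C| = m ->
     is_profile C P ->
     forall ax, f C P ax <-> scoring_rule (hstar m) (h m) C P ax) ->
  forall m : nat, (4 <= m)%N -> hstar m <= h m.
Proof.
move=> fresh _ clon hpos f_scoring m m4.
have [W cardW] := exists_fset_card fresh (m - 3).
have [w wW] : exists w, w \in W.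
  by apply/fset0Pn; rewrite -cardfs_gt0 cardW subn_gt0.
have [x xW] := fresh W; have [y yW] := fresh (x |` W).
have [z zW] := fresh (y |` (x |` W)); have [a aW] := fresh (z |` (y |` (x |` W))).
move: yW zW aW; rewrite !inE !negb_or => /andP[yx yW] /and3P[zy zx zW] /and4P[az ay ax aW].
have card_small : #|` small_cands x y z W| = m.
  by rewrite card_small_cands ?fset_uniq // cardW -addn3 subnK // ltnW.
have [hs0 h0] := hpos m.+1 (leqW (ltnW m4)).
apply: (cloning_forces_hstar_le_h yx zx zy ax ay az aW xW yW zW (fset_uniq W) wW clon
  (ltW hs0) (ltW h0)) => ax'.
- by move=> /(f_scoring _ _ _ (ltnW m4) card_small (@is_profile_small_profile _ x y z W)).
- have card_big : #|` big_cands a x y z W| = m.+1.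
    by rewrite (card_big_cands ax ay az aW) card_small.
  by move=> /(f_scoring _ _ _ (leqW (ltnW m4)) card_big (@is_profile_big_profile _ a x y z W)).
Qed.
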